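(* The universal unital C*-algebra generated by the entries $p_{ij}$ ($i=1,2$, $j=1,2,3,4$) of a $2\times4$ magic isometry is isomorphic to $C^\ast(Q_3)$ via $p_{11}\mapsto p_{000}$, $p_{12}\mapsto p_{011}$, $p_{13}\mapsto p_{110}$, $p_{14}\mapsto p_{101}$, $p_{21}\mapsto p_{111}$, $p_{22}\mapsto p_{100}$, $p_{23}\mapsto p_{001}$, $p_{24}\mapsto p_{010}$.
   Context: A $2\times 4$ magic isometry in a unital C*-algebra is a matrix $(P_{ij})_{i\le2,j\le4}$ of projections such that each row $(P_{ij})_{j=1}^4$ sums to $1$ and, for each $j$, $P_{1j}P_{2j}=0$. The cube $Q_3$ is the bipartite graph on the eight binary strings of length $3$, with classes $U_3=\{000,011,101,110\}$ (even number of $1$'s) and $V_3=\{001,010,100,111\}$, two strings adjacent iff they differ in exactly one digit. $C^\ast(Q_3)$ is the universal unital C*-algebra generated by projections $p_x$ ($x$ a binary string of length $3$) with $\sum_{u\in U_3}p_u=1=\sum_{v\in V_3}p_v$ and $p_up_v=0$ whenever $u\in U_3$, $v\in V_3$ are not adjacent. *)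

From HB Require Import structures.
From mathcomp Require Import all_boot all_order all_algebra.
From mathcomp Require Import reals.
From mathcomp Require Import complex.
Set Implicit Arguments.
Unset Strict Implicit.
Unset Printing Implicit Defensive.
Import Order.TTheory GRing.Theory Num.Theory.
Local Open Scope ring_scope.

Record cstar (R : realType) := CStar {
  cs_T :> algType R[i];
  cs_star : cs_T -> cs_T;
  cs_norm : cs_T -> R;
  cs_starK : forall x, cs_star (cs_star x) = x;
  cs_starD : forall x y, cs_star (x + y) = cs_star x + cs_star y;
  cs_starZ : forall (a : R[i]) x, cs_star (a *: x) = a^* *: cs_star x;
  cs_starM : forall x y, cs_star (x * y) = cs_star y * cs_star x;
  cs_norm_eq0 : forall x, cs_norm x = 0 -> x = 0;
  cs_normD : forall x y, cs_norm (x + y) <= cs_norm x + cs_norm y;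
  cs_normZ : forall (a : R[i]) x, cs_norm (a *: x) = @Normc.normc R a * cs_norm x;
  cs_normM : forall x y, cs_norm (x * y) <= cs_norm x * cs_norm y;
  cs_cstar_id : forall x, cs_norm (cs_star x * x) = cs_norm x ^+ 2;
  cs_complete : forall u : nat -> cs_T,
    (forall e : R, 0 < e -> exists N : nat, forall m n : nat,
        (N <= m)%N -> (N <= n)%N -> cs_norm (u m - u n) < e) ->
    exists l : cs_T, forall e : R, 0 < e -> exists N : nat, forall n : nat,
        (N <= n)%N -> cs_norm (u n - l) < e
}.

Definition star_hom (R : realType) (A B : cstar R) (f : A -> B) : Prop :=
  [/\ forall (a : R[i]) x y, f (a *: x + y) = a *: f x + f y,
      f 1 = 1,
      forall x y, f (x * y) = f x * f y &
      forall x, f (cs_star x) = cs_star (f x)].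

Definition is_proj (R : realType) (A : cstar R) (p : A) : Prop :=
  p * p = p /\ cs_star p = p.

Definition universal (R : realType) (I : Type)
    (rel : forall B : cstar R, (I -> B) -> Prop) (A : cstar R) (g : I -> A) : Prop :=
  rel A g /\
  forall (B : cstar R) (f : I -> B), rel B f ->
    exists! phi : A -> B, star_hom phi /\ forall i, phi (g i) = f i.

(* 2 x 4 magic isometry; rows i : 'I_2, columns j : 'I_4 (0-based) *)
Definition magic_iso_rel (R : realType) (B : cstar R) (P : 'I_2 * 'I_4 -> B) : Prop :=
  [/\ forall i j, is_proj (P (i, j)),
      forall i : 'I_2, \sum_(j < 4) P (i, j) = 1 &
      forall j : 'I_4, P (0, j) * P (1, j) = 0].

(* The cube Q_3 : binary strings of length 3 *)
Definition bits := (bool * bool * bool)%type.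
Definition bs (a b c : bool) : bits := (a, b, c).
Definition nones (x : bits) : nat := let: (a, b, c) := x in (a + b + c)%N.
Definition U3 (x : bits) : bool := ~~ odd (nones x).
Definition V3 (x : bits) : bool := odd (nones x).
Definition hamming (x y : bits) : nat :=
  let: (a, b, c) := x in let: (a', b', c') := y in
  ((a != a') + (b != b') + (c != c'))%N.
Definition adjacent (x y : bits) : bool := hamming x y == 1%N.

Definition cube_rel (R : realType) (B : cstar R) (p : bits -> B) : Prop :=
  [/\ forall x, is_proj (p x),
      \sum_(u | U3 u) p u = 1,
      \sum_(v | V3 v) p v = 1 &
      forall u v, U3 u -> V3 v -> ~~ adjacent u v -> p u * p v = 0].

(* The assignment p_ij |-> p_x of the statement (indices 0-based). *)
Definition sigma (ij : 'I_2 * 'I_4) : bits :=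
  match nat_of_ord ij.1, nat_of_ord ij.2 with
  | 0, 0 => bs false false false
  | 0, 1 => bs false true true
  | 0, 2 => bs true true false
  | 0, _ => bs true false true
  | _, 0 => bs true true true
  | _, 1 => bs true false false
  | _, 2 => bs false false true
  | _, _ => bs false true false
  end.

(* Both algebras are universal for relations on eight projections, and the
   relabelling sigma is a bijection of generators carrying each family of
   relations onto the other.  The two rows of the magic isometry go to the two
   colour classes U3 and V3 of the cube, so the row sums become the class sums.
   Two vertices of opposite parity are non-adjacent exactly when they are
   antipodal, and sigma sends each column to an antipodal pair, so the column
   orthogonality P_1j P_2j = 0 becomes the orthogonality of non-adjacent
   vertices.  The universal properties then produce mutually inverse unital
   *-homomorphisms. *)

From HB Require Import structures.
From mathcomp Require Import all_boot all_order all_algebra.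
From mathcomp Require Import reals complex.
Set Implicit Arguments.
Unset Strict Implicit.
Unset Printing Implicit Defensive.
Import GRing.Theory.
Local Open Scope ring_scope.

Section UniversalCStar.

Variable R : realType.

Lemma star_hom_id (A : cstar R) : star_hom (@id A).
Proof. by split. Qed.

Lemma star_hom_comp (A B C : cstar R) (f : A -> B) (g : B -> C) :
  star_hom f -> star_hom g -> star_hom (g \o f).
Proof.
case=> fZD f1 fM fstar [gZD g1 gM gstar]; split=> /=.
- by move=> a x y; rewrite fZD gZD.
- by rewrite f1 g1.
- by move=> x y; rewrite fM gM.
- by move=> x; rewrite fstar gstar.
Qed.

Lemma universal_endo_id I (rel : forall B : cstar R, (I -> B) -> Prop)
    (A : cstar R) (g : I -> A) (f : A -> A) :
  universal rel g -> star_hom f -> (forall i, f (g i) = g i) -> f =1 id.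
Proof.
move=> [relA univA] homf fg x.
have [u [_ u_uniq]] := univA A g relA.
rewrite -(u_uniq f (conj homf fg)).
by rewrite (u_uniq id (conj (star_hom_id A) (fun=> erefl))).
Qed.

Lemma universal_iso I J (relI : forall B : cstar R, (I -> B) -> Prop)
    (relJ : forall B : cstar R, (J -> B) -> Prop)
    (A : cstar R) (p : I -> A) (B : cstar R) (q : J -> B)
    (s : I -> J) (t : J -> I) :
  cancel s t -> cancel t s -> universal relI p -> universal relJ q ->
  relI B (q \o s) -> relJ A (p \o t) ->
  exists phi : A -> B,
    [/\ star_hom phi, bijective phi & forall i, phi (p i) = q (s i)].
Proof.
move=> sK tK univA univB relqs relpt.
have [psi [[hom_psi psi_p] _]] := univB.2 A _ relpt.
have [phi [[hom_phi phi_p] _]] := univA.2 B _ relqs.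
exists phi; split=> //; exists psi.
- apply: (universal_endo_id univA (star_hom_comp hom_phi hom_psi)) => i /=.
  by rewrite phi_p psi_p /= sK.
- apply: (universal_endo_id univB (star_hom_comp hom_psi hom_phi)) => j /=.
  by rewrite psi_p phi_p /= tK.
Qed.

End UniversalCStar.

Definition sigma_inv (x : bits) : 'I_2 * 'I_4 :=
  match x with
  | (false, false, false) => (0, 0)
  | (false, true, true) => (0, 1)
  | (true, true, false) => (0, 2%:R)
  | (true, false, true) => (0, 3%:R)
  | (true, true, true) => (1, 0)
  | (true, false, false) => (1, 1)
  | (false, false, true) => (1, 2%:R)
  | (false, true, false) => (1, 3%:R)
  end.

Lemma sigmaK : cancel sigma sigma_inv.
Proof. by case=> -[[|[|//]] ?] [[|[|[|[|//]]]] ?]; apply/eqP. Qed.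

Lemma sigma_invK : cancel sigma_inv sigma.
Proof. by case=> -[[] []] []. Qed.

Lemma U3_sigma ij : U3 (sigma ij) = (ij.1 == 0).
Proof. by case: ij => -[[|[|//]] ?] [[|[|[|[|//]]]] ?]. Qed.

Lemma V3_sigma ij : V3 (sigma ij) = (ij.1 == 1).
Proof. by case: ij => -[[|[|//]] ?] [[|[|[|[|//]]]] ?]. Qed.

Lemma sum_fst_eq (V : nmodType) (I J : finType) (F : I * J -> V) (i : I) :
  \sum_(ij | ij.1 == i) F ij = \sum_j F (i, j).
Proof.
rewrite -(big_pred1_eq +%R i (fun i => \sum_j F (i, j))) pair_big_dep.
by apply: eq_big => -[i' j] //=; rewrite andbT.
Qed.

Lemma sum_sigma_row (V : nmodType) (G : bits -> V) (P : pred bits) (i : 'I_2) :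
  (forall ij, P (sigma ij) = (ij.1 == i)) ->
  \sum_(u | P u) G u = \sum_j G (sigma (i, j)).
Proof.
move=> P_sigma; rewrite (reindex sigma); last first.
  by exists sigma_inv => x _; rewrite ?sigmaK ?sigma_invK.
rewrite -(sum_fst_eq (G \o sigma)).
by apply: eq_bigl => ij; rewrite P_sigma.
Qed.

Lemma sigma_column (j : 'I_4) :
  [/\ U3 (sigma (0, j)), V3 (sigma (1, j)) & ~~ adjacent (sigma (0, j)) (sigma (1, j))].
Proof. by case: j => -[|[|[|[|//]]]]. Qed.

Lemma nonadjacent_sigma_inv u v : U3 u -> V3 v -> ~~ adjacent u v ->
  exists j, sigma_inv u = (0, j) /\ sigma_inv v = (1, j).
Proof. by case: u => -[[] []] []; case: v => -[[] []] [] //= _ _ _; eexists. Qed.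

Lemma magic_iso_rel_sigma (R : realType) (B : cstar R) (q : bits -> B) :
  cube_rel q -> magic_iso_rel (q \o sigma).
Proof.
case=> q_proj sumU sumV q_orth; split=> [i j|i|j] /=; first exact: q_proj.
- have [->|->] : i = 0 \/ i = 1 by case: i => -[|[|//]] ?; [left|right]; apply: val_inj.
    by rewrite -(sum_sigma_row q U3_sigma) sumU.
  by rewrite -(sum_sigma_row q V3_sigma) sumV.
- by have [U3u V3v nadj] := sigma_column j; apply: q_orth.
Qed.

Lemma cube_rel_sigma_inv (R : realType) (A : cstar R) (p : 'I_2 * 'I_4 -> A) :
  magic_iso_rel p -> cube_rel (p \o sigma_inv).
Proof.
case=> p_proj sum_row p_orth; split=> [x|||u v U3u V3v nadj] /=.
- by case: (sigma_inv x) => i j; apply: p_proj.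
- rewrite (sum_sigma_row _ U3_sigma); under eq_bigr do rewrite sigmaK.
  exact: sum_row.
- rewrite (sum_sigma_row _ V3_sigma); under eq_bigr do rewrite sigmaK.
  exact: sum_row.
- by have [j [-> ->]] := nonadjacent_sigma_inv U3u V3v nadj; apply: p_orth.
Qed.

Theorem proposition7p2 (R : realType)
    (A : cstar R) (p : 'I_2 * 'I_4 -> A)
    (B : cstar R) (q : bits -> B) :
  universal (@magic_iso_rel R) p ->
  universal (@cube_rel R) q ->
  exists phi : A -> B,
    [/\ star_hom phi, bijective phi & forall ij, phi (p ij) = q (sigma ij)].
Proof.
move=> univA univB.
apply: (universal_iso sigmaK sigma_invK univA univB).
- exact: magic_iso_rel_sigma univB.1.
- exact: cube_rel_sigma_inv univA.1.
Qed.
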